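(* Let $R$ be a nontrivial ring (with unity) and $\Sigma$ an alphabet. Then for every $L\in\mathrm{RevL}(\mathbb{F}_2,\Sigma)$, the characteristic series $\underline{L}$ of $L$ over $R$ belongs to $\mathrm{Rev}(R,\Sigma)$, and $L\in\mathrm{RevL}(R,\Sigma)$.
   Context: A ring is a semiring $(R,+,\cdot,0,1)$ whose additive monoid is an abelian group (not necessarily commutative multiplication); nontrivial means $0\neq1$. $\mathbb{F}_2$ is the two-element field. For a semiring $S$ and finite nonempty alphabet $\Sigma$, a series is a map $r\colon\Sigma^*\to S$ with value $(r,w)$ and support $\mathrm{supp}(r)=\{w\mid(r,w)\neq0\}$; the characteristic series $\underline{L}$ of $L\subseteq\Sigma^*$ over $S$ has coefficient $1$ on $L$ and $0$ elsewhere. A weighted automaton over $S$ and $\Sigma$ is $\mathcal{A}=(Q,\sigma,\iota,\tau)$ with $Q$ finite, $\sigma\colon Q\times\Sigma\times Q\to S$, $\iota,\tau\colon Q\to S$; a run on $w=a_1\cdots a_t$ is $q_0a_1q_1\cdots a_tq_t$ with all $\sigma(q_{k-1},a_k,q_k)\neq0$, of weight $\iota(q_0)\sigma(q_0,a_1,q_1)\cdots\sigma(q_{t-1},a_t,q_t)\tau(q_t)$, and $(\|\mathcal{A}\|,w)$ is the sum of weights of all runs on $w$. $\mathcal{A}$ is reversible if for all $p,p',q,q'\in Q$, $a\in\Sigma$: $\sigma(p,a,q)\neq0\neq\sigma(p,a,q')$ implies $q=q'$, and $\sigma(p,a,q)\neq0\neq\sigma(p',a,q)$ implies $p=p'$.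 $\mathrm{Rev}(S,\Sigma)$ is the set of series realised by reversible weighted automata over $S$ and $\Sigma$, and $\mathrm{RevL}(S,\Sigma)=\{\mathrm{supp}(r)\mid r\in\mathrm{Rev}(S,\Sigma)\}$. *)

From mathcomp Require Import all_boot all_algebra.
From mathcomp Require Import boolp.
Set Implicit Arguments. Unset Strict Implicit. Unset Printing Implicit Defensive.
Import GRing.Theory.
Local Open Scope ring_scope.

(* Semirings are MathComp [pzSemiRingType]s (0 = 1 allowed); the alphabet is
   a finite type [Sigma] (nonemptiness is a separate hypothesis); words are
   [seq Sigma]; a series is a function [seq Sigma -> S]. *)

Record wautomaton (S : pzSemiRingType) (Sigma : finType) := WAut {
  wa_state : finType;
  wa_trans : wa_state -> Sigma -> wa_state -> S;
  wa_init  : wa_state -> S;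
  wa_fin   : wa_state -> S }.
Arguments wa_state {S Sigma}.
Arguments wa_trans {S Sigma}.
Arguments wa_init {S Sigma}.
Arguments wa_fin {S Sigma}.

Section Auto.
Variables (S : pzSemiRingType) (Sigma : finType) (A : wautomaton S Sigma).

Definition letter (w : seq Sigma) (k : 'I_(size w)) : Sigma := tnth (in_tuple w) k.

Definition is_run (w : seq Sigma) (r : {ffun 'I_(size w).+1 -> wa_state A}) : bool :=
  [forall k : 'I_(size w),
     wa_trans A (r (widen_ord (leqnSn _) k)) (letter k) (r (lift ord0 k)) != 0].

Definition run_weight (w : seq Sigma) (r : {ffun 'I_(size w).+1 -> wa_state A}) : S :=
  wa_init A (r ord0)
  * (\prod_(k < size w)
       wa_trans A (r (widen_ord (leqnSn _) k)) (letter k) (r (lift ord0 k)))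
  * wa_fin A (r ord_max).

Definition behaviour (w : seq Sigma) : S :=
  \sum_(r : {ffun 'I_(size w).+1 -> wa_state A} | is_run r) run_weight r.

Definition reversible : Prop :=
  (forall (p q q' : wa_state A) (a : Sigma),
      wa_trans A p a q != 0 -> wa_trans A p a q' != 0 -> q = q') /\
  (forall (p p' q : wa_state A) (a : Sigma),
      wa_trans A p a q != 0 -> wa_trans A p' a q != 0 -> p = p').
End Auto.

Definition Rev (S : pzSemiRingType) (Sigma : finType) (f : seq Sigma -> S) : Prop :=
  exists A : wautomaton S Sigma, reversible A /\ forall w, behaviour A w = f w.

Definition RevL (S : pzSemiRingType) (Sigma : finType) (L : seq Sigma -> Prop) : Prop :=
  exists f : seq Sigma -> S, Rev f /\ forall w, L w <-> f w != 0.

Definition char_series (S : pzSemiRingType) (Sigma : finType)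
  (L : seq Sigma -> Prop) (w : seq Sigma) : S :=
  if `[< L w >] then 1 else 0.

From mathcomp Require Import all_boot all_algebra.
From mathcomp Require Import boolp.
Set Implicit Arguments. Unset Strict Implicit. Unset Printing Implicit Defensive.
Import GRing.Theory.
Local Open Scope ring_scope.

(* Over F_2 the transitions of a reversible automaton A are partial injections
   [next a], so A maps w to the parity of the number of initial states from
   which [next] follows w to a final state, i.e. of
   #|initial :&: accepting w|.  Over any ring R, the subset automaton moving a
   set X of states along a exactly when [next a] is defined on all of X is
   again reversible, since [next a] is injective, and X contributes to w iff
   X \subset initial :&: accepting w.  Giving X the initial weight
   (-2)^(#|X|-1), and the empty set weight 0, turns the sum into
   (1 - (-1)^#|G|) / 2 = odd #|G|; this identity is proved in int, where -2
   can be cancelled, and then mapped to R. *)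

Section FfunCons.
Variables (T : finType) (n : nat).

Definition fcons (x : T) (g : {ffun 'I_n -> T}) : {ffun 'I_n.+1 -> T} :=
  [ffun i => if unlift ord0 i is Some j then g j else x].

Definition ftail (f : {ffun 'I_n.+1 -> T}) : {ffun 'I_n -> T} :=
  [ffun j => f (lift ord0 j)].

Lemma fcons0 x g : fcons x g ord0 = x.
Proof. by rewrite ffunE unlift_none. Qed.

Lemma fconsS x g j : fcons x g (lift ord0 j) = g j.
Proof. by rewrite ffunE liftK. Qed.

Lemma fcons_ftail (f : {ffun 'I_n.+1 -> T}) : fcons (f ord0) (ftail f) = f.
Proof. by apply/ffunP => i; rewrite ffunE; case: unliftP => [j ->|->]; rewrite ?ffunE. Qed.

Lemma big_ffun_cons (R : Type) (idx : R) (op : Monoid.com_law idx)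
    (F : {ffun 'I_n.+1 -> T} -> R) :
  \big[op/idx]_f F f = \big[op/idx]_x \big[op/idx]_(g : {ffun 'I_n -> T}) F (fcons x g).
Proof.
rewrite pair_big /= (reindex (fun xg : T * {ffun 'I_n -> T} => fcons xg.1 xg.2)) //.
exists (fun f : {ffun _ -> _} => (f ord0, ftail f)) => [[x g] _ | f _] /=; last exact: fcons_ftail.
by rewrite fcons0; congr (_, _); apply/ffunP => j; rewrite ffunE fconsS.
Qed.

End FfunCons.

Lemma widen_ord0 n m (le_nm1 : (n.+1 <= m.+1)%N) : widen_ord le_nm1 ord0 = ord0.
Proof. exact: val_inj. Qed.

Lemma widen_ord_lift0 n m (le_nm : (n <= m)%N) (le_nm1 : (n.+1 <= m.+1)%N) (k : 'I_n) :
  widen_ord le_nm1 (lift ord0 k) = lift ord0 (widen_ord le_nm k).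
Proof. exact: val_inj. Qed.

Lemma letter_cons0 (Sigma : finType) a (w : seq Sigma) : letter (w := a :: w) ord0 = a.
Proof. by rewrite /letter (tnth_nth a). Qed.

Lemma letter_consS (Sigma : finType) a (w : seq Sigma) k :
  letter (w := a :: w) (lift ord0 k) = letter k.
Proof. by rewrite /letter !(tnth_nth a). Qed.

Section Runs.
Variables (S : pzSemiRingType) (Sigma : finType) (A : wautomaton S Sigma).
Local Notation Q := (wa_state A).
Local Notation run w := {ffun 'I_(size w).+1 -> Q}.

Definition run_step w (r : run w) (k : 'I_(size w)) : S :=
  wa_trans A (r (widen_ord (leqnSn _) k)) (letter k) (r (lift ord0 k)).

Definition path_weight w (r : run w) : S :=
  (\prod_(k < size w) run_step r k) * wa_fin A (r ord_max).

Lemma is_runE w (r : run w) : is_run r = [forall k, run_step r k != 0].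
Proof. by []. Qed.

Lemma run_step_cons0 a w q (g : run w) :
  run_step (w := a :: w) (fcons q g) ord0 = wa_trans A q a (g ord0).
Proof.
by rewrite /run_step widen_ord0 fcons0 fconsS letter_cons0.
Qed.

Lemma run_step_consS a w q (g : run w) (k : 'I_(size w)) :
  run_step (w := a :: w) (fcons q g) (lift ord0 k) = run_step g k.
Proof. by rewrite /run_step (widen_ord_lift0 (leqnSn _)) !fconsS letter_consS. Qed.

Lemma is_run_cons a w q (g : run w) :
  is_run (w := a :: w) (fcons q g) = (wa_trans A q a (g ord0) != 0) && is_run g.
Proof.
rewrite !is_runE; apply/forallP/andP => [ok | [ok0 /forallP okS] k].
  split; first by have := ok ord0; rewrite run_step_cons0.
  by apply/forallP => k; have := ok (lift ord0 k); rewrite run_step_consS.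
by case: (unliftP ord0 k) => [j ->|->]; rewrite ?run_step_consS ?run_step_cons0.
Qed.

Lemma path_weight_cons a w q (g : run w) :
  path_weight (w := a :: w) (fcons q g) = wa_trans A q a (g ord0) * path_weight g.
Proof.
rewrite /path_weight big_ord_recl run_step_cons0 -mulrA.
have -> : ord_max = lift ord0 ord_max :> 'I_(size w).+2 by apply: val_inj.
by rewrite fconsS; congr (_ * (_ * _)); apply: eq_bigr => k _; rewrite run_step_consS.
Qed.

Lemma path_weight_eq0 w (r : run w) : ~~ is_run r -> path_weight r = 0.
Proof.
elim: w r => [|a w IH] r; first by rewrite is_runE; case/forallP => -[].
rewrite -[r]fcons_ftail is_run_cons path_weight_cons negb_and negbK.
by case/orP => [/eqP-> | /IH->]; rewrite ?mul0r ?mulr0.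
Qed.

Fixpoint behaviour_from (p : Q) (w : seq Sigma) : S :=
  if w is a :: w' then \sum_q wa_trans A p a q * behaviour_from q w' else wa_fin A p.

Lemma behaviour_from_paths p w :
  behaviour_from p w = \sum_(r : run w | r ord0 == p) path_weight r.
Proof.
elim: w p => [|a w IH] p /=.
  rewrite (big_pred1 [ffun=> p]) => [|r]; first by rewrite /path_weight big_ord0 mul1r ffunE.
  by apply/eqP/eqP => [<- | ->]; [apply/ffunP => i; rewrite ffunE (ord1 i) | rewrite ffunE].
rewrite [RHS]big_mkcond big_ffun_cons [RHS](bigD1 p) //= [X in _ = _ + X]big1 ?addr0.
  2: by move=> q /negPf qp; apply: big1 => g _; rewrite fcons0 qp.
rewrite (partition_big (fun g : run w => g ord0) predT) //=; apply: eq_bigr => q _.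
rewrite IH mulr_sumr; apply: eq_bigr => g /eqP g0.
by rewrite fcons0 eqxx path_weight_cons g0.
Qed.

Lemma behaviourE w : behaviour A w = \sum_p wa_init A p * behaviour_from p w.
Proof.
rewrite /behaviour big_mkcond (partition_big (fun r : run w => r ord0) predT) //=.
apply: eq_bigr => p _; rewrite behaviour_from_paths mulr_sumr.
apply: eq_bigr => r /eqP r0; rewrite /run_weight -mulrA r0.
by case: ifP => // /negbT/path_weight_eq0->; rewrite mulr0.
Qed.

End Runs.

Arguments behaviour_from {S Sigma} A p w.

Definition subset_coeff (k : nat) : int := if k is k'.+1 then (-2) ^+ k' else 0.

Lemma sum_subset_coeff_binomial n : \sum_(k < n.+1) subset_coeff k *+ 'C(n, k) = odd n.
Proof.
apply: (@mulfI _ (-2)) => //; rewrite mulr_sumr.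
have -> : -2 * (odd n : int) = (1 + -2) ^+ n - 1.
  by rewrite (_ : 1 + -2 = -1) // -signr_odd; case: (odd n).
rewrite exprDn !big_ord_recl /= mul0rn mulr0 add0r expr0 expr1n mulr1 bin0 addrAC subrr add0r.
by apply: eq_bigr => i _; rewrite expr1n mul1r add0n -add1n exprD mulrnAr.
Qed.

Lemma sum_subset_coeff (T : finType) (G : {set T}) :
  \sum_(X : {set T} | X \subset G) subset_coeff #|X| = odd #|G|.
Proof.
rewrite (partition_big (fun X : {set T} => inord #|X| : 'I_#|G|.+1) predT) //=.
rewrite -sum_subset_coeff_binomial; apply: eq_bigr => k _.
pose draws := [set X : {set T} | X \subset G & #|X| == k].
rewrite (eq_bigl (fun X => X \in draws)); last first.
  move=> X; rewrite !inE; case XG: (X \subset G) => //=.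
  by rewrite -(inj_eq val_inj) /= inordK // ltnS subset_leq_card.
rewrite (eq_bigr (fun _ => subset_coeff k)); last by move=> X; rewrite inE => /andP[_ /eqP->].
by rewrite sumr_const cards_draws.
Qed.

Lemma sum_subset_coeffR (R : pzRingType) (T : finType) (G : {set T}) :
  \sum_(X : {set T} | X \subset G) (subset_coeff #|X|)%:~R = (odd #|G|)%:R :> R.
Proof. by rewrite -raddf_sum /= sum_subset_coeff. Qed.

Lemma sum_indicator (S : pzSemiRingType) (T : finType) (P : pred T) (F : T -> S) :
  \sum_x (P x)%:R * F x = \sum_(x | P x) F x.
Proof. by rewrite [RHS]big_mkcond; apply: eq_bigr => x _; case: (P x); rewrite ?mul1r ?mul0r. Qed.

Lemma F2_eq_boolr (x : 'F_2) : x = (x != 0)%:R.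
Proof. by case: x => [[|[|m]] lt_m2] //=; apply/val_inj. Qed.

Lemma F2_natr_neq0 n : (n%:R != 0 :> 'F_2) = odd n.
Proof. by rewrite -Fp_nat_mod // modn2; case: odd; rewrite ?oner_neq0 ?eqxx. Qed.

Section ParityAutomaton.
Variables (Sigma : finType) (A : wautomaton 'F_2 Sigma).
Hypothesis revA : reversible A.
Local Notation Q := (wa_state A).

Definition next a (p : Q) : option Q := [pick q | wa_trans A p a q != 0].

Lemma trans_next p a q : (wa_trans A p a q != 0) = (next a p == Some q).
Proof.
rewrite /next; case: pickP => [q' tr_q'|tr0]; last by rewrite tr0.
apply/idP/eqP => [tr_q | [<-] //]; congr Some; exact: revA.1 tr_q' tr_q.
Qed.

Lemma trans_F2 p a q : wa_trans A p a q = (next a p == Some q)%:R.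
Proof. by rewrite [LHS]F2_eq_boolr trans_next. Qed.

Lemma next_inj a p p' q : next a p = Some q -> next a p' = Some q -> p = p'.
Proof. by move=> /eqP; rewrite -trans_next => tr /eqP; rewrite -trans_next; exact: revA.2. Qed.

Fixpoint accepts_from (p : Q) (w : seq Sigma) : bool :=
  if w is a :: w' then (if next a p is Some q then accepts_from q w' else false)
  else wa_fin A p != 0.

Definition accepting w : {set Q} := [set p | accepts_from p w].
Definition initial : {set Q} := [set p | wa_init A p != 0].

Lemma behaviour_from_F2 p w : behaviour_from A p w = (accepts_from p w)%:R.
Proof.
elim: w p => [|a w IH] p /=; first exact: F2_eq_boolr.
under eq_bigr do rewrite trans_F2 IH.
rewrite sum_indicator; case: (next a p) => [q|]; last by rewrite big_pred0.
by rewrite (big_pred1 q) // => q'; rewrite /= eq_sym.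
Qed.

Lemma behaviour_F2 w : behaviour A w = #|initial :&: accepting w|%:R.
Proof.
rewrite behaviourE -sumr_const [RHS]big_mkcond; apply: eq_bigr => p _ /=.
rewrite behaviour_from_F2 [wa_init A p]F2_eq_boolr !inE.
by case: (wa_init A p != 0); case: (accepts_from p w); rewrite ?mul1r ?mul0r.
Qed.

Definition defined_on a (X : {set Q}) : bool := [forall p in X, next a p != None].
Definition step_image a (X : {set Q}) : {set Q} := [set q | [exists p in X, next a p == Some q]].

Lemma step_image_sub a X X' :
  defined_on a X -> step_image a X \subset step_image a X' -> X \subset X'.
Proof.
move=> /forallP defX /subsetP sub; apply/subsetP => p pX.
move: (defX p); rewrite pX; case nextp: (next a p) => [q|] // _.
have : q \in step_image a X'.
  by apply: sub; rewrite inE; apply/existsP; exists p; rewrite pX nextp eqxx.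
by rewrite inE => /existsP[p' /andP[p'X /eqP /(next_inj nextp) ->]].
Qed.

Lemma subset_accepting_cons a w (X : {set Q}) :
  (X \subset accepting (a :: w)) = defined_on a X && (step_image a X \subset accepting w).
Proof.
apply/subsetP/andP => [acc | [/forallP defX /subsetP acc] p pX].
  split.
    by apply/forallP => p; apply/implyP => pX; have := acc p pX; rewrite inE /=; case: next.
  apply/subsetP => q; rewrite inE => /existsP[p /andP[pX /eqP nextp]].
  by have := acc p pX; rewrite !inE /= nextp.
move: (defX p); rewrite pX inE /=; case nextp: (next a p) => [q|] // _.
suff: q \in accepting w by rewrite inE.
by apply: acc; rewrite inE; apply/existsP; exists p; rewrite pX nextp eqxx.
Qed.

Variable R : pzRingType.

Definition parity_automaton : wautomaton R Sigma := {|
  wa_state := {set Q};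
  wa_trans X a Y := (defined_on a X && (Y == step_image a X))%:R;
  wa_init X := if X \subset initial then (subset_coeff #|X|)%:~R else 0;
  wa_fin X := (X \subset accepting [::])%:R |}.

Lemma parity_trans_neq0 X a Y :
  wa_trans parity_automaton X a Y != 0 -> defined_on a X /\ Y = step_image a X.
Proof. by rewrite /=; case: andP => [[defX /eqP]|]; rewrite ?eqxx. Qed.

Lemma parity_automaton_reversible : reversible parity_automaton.
Proof.
split=> [X Y Y' a | X X' Y a] /parity_trans_neq0[defX ->] /parity_trans_neq0[defX' eqY] //.
by apply/eqP; rewrite eqEsubset (step_image_sub defX) ?(step_image_sub defX') ?eqY.
Qed.

Lemma behaviour_from_parity X w :
  behaviour_from parity_automaton X w = (X \subset accepting w)%:R.
Proof.
elim: w X => [|a w IH] X //=.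
under eq_bigr do rewrite IH.
rewrite sum_indicator subset_accepting_cons; case: (defined_on a X); last by rewrite big_pred0.
by rewrite big_pred1_eq.
Qed.

Lemma behaviour_parity w :
  behaviour parity_automaton w = (odd #|initial :&: accepting w|)%:R.
Proof.
rewrite behaviourE -sum_subset_coeffR [RHS]big_mkcond; apply: eq_bigr => X _ /=.
rewrite behaviour_from_parity subsetI.
by case: (X \subset initial); case: (X \subset accepting w); rewrite ?mulr1 ?mulr0 ?mul0r.
Qed.

End ParityAutomaton.

Lemma Rev_char_series_of_RevL_F2 (R : pzRingType) (Sigma : finType) (L : seq Sigma -> Prop) :
  RevL 'F_2 L -> Rev (char_series R L).
Proof.
move=> [f [[A [revA behA]] suppL]].
exists (parity_automaton A R); split; first exact: parity_automaton_reversible.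
move=> w; rewrite behaviour_parity /char_series.
have oddL : L w <-> odd #|initial A :&: accepting A w|.
  by rewrite -F2_natr_neq0 -behaviour_F2 // behA.
case: asboolP => [Lw | nLw]; first by move/iffLR: oddL => /(_ Lw) ->.
by case: odd oddL => // /iffRL/(_ isT).
Qed.

Lemma RevL_of_Rev_char_series (S : nzSemiRingType) (Sigma : finType) (L : seq Sigma -> Prop) :
  Rev (char_series S L) -> RevL S L.
Proof.
move=> revL; exists (char_series S L); split=> // w.
by rewrite /char_series; case: asboolP => Lw; rewrite ?oner_neq0 ?eqxx.
Qed.

Theorem lemma2 (R : nzRingType) (Sigma : finType) (HSigma : (0 < #|Sigma|)%N)
  (L : seq Sigma -> Prop) :
  @RevL 'F_2 Sigma L ->
  @Rev R Sigma (char_series R L) /\ @RevL R Sigma L.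
Proof.
move=> revL_F2; have revR := Rev_char_series_of_RevL_F2 R revL_F2.
by split; [exact: revR | exact: RevL_of_Rev_char_series revR].
Qed.
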